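(* Let $\mathsf V$ be a quantale in which $k=\top$ is the top element and for which there is a sequence $(u_n)_{n\in\mathbb N}$ with $\bigvee_n u_n=k$, $u_n\ll k$ and $u_n\le u_{n+1}$ for all $n$. (1) If $X=(X,a)$ is a symmetric $\mathsf V$-category and $\varphi:E\rightharpoonup X$, $\psi:X\rightharpoonup E$ are modules with $\varphi\dashv\psi$, then $\varphi(x)=\psi(x)$ for all $x\in X$. (2) If $M$ is a sub-$\mathsf V$-category of a $\mathsf V$-category $Y=(Y,b)$ and $M$ is symmetric, then $\overline M$ (with the restricted structure) is symmetric. (3) In particular, for a symmetric $\mathsf V$-category $X$, its Cauchy completion $\widetilde X$ is symmetric.
   Context: A quantale $(\mathsf V,\otimes,k)$ is a complete anti-symmetric lattice with an associative, commutative operation $\otimes$ with neutral element $k$ distributing over arbitrary suprema; $\hom(u,-)$ is the right adjoint of $u\otimes-$. $u\ll x$ means: for every $S\subseteq\mathsf V$ with $x\le\bigvee S$ there is $s\in S$ with $u\le s$. A $\mathsf V$-category $(X,a)$ is a set with $a:X\times X\to\mathsf V$ such that $k\le a(x,x)$ and $a(x,y)\otimes a(y,z)\le a(x,z)$; it is symmetric if $a(x,y)=a(y,x)$ for all $x,y$; a sub-$\mathsf V$-category carries the restricted structure. $E=(\{\star\},k)$; modules $\varphi:E\rightharpoonup X$ and $\psi:X\rightharpoonup E$ are maps $X\to\mathsf V$ with $\varphi(x)\otimes a(x,y)\le\varphi(y)$ and $a(x,y)\otimes\psi(y)\le\psi(x)$; $\varphi\dashv\psi$ means $k\le\bigvee_x\varphi(x)\otimes\psi(x)$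 and $\psi(x)\otimes\varphi(y)\le a(x,y)$ for all $x,y$. For $M\subseteq Y$, $\overline M=\{y\in Y\mid k\le\bigvee_{z\in M}b(y,z)\otimes b(z,y)\}$. The Cauchy completion $\widetilde X$ is the set of right adjoint modules $\psi:X\rightharpoonup E$ with structure $[\psi,\psi']=\bigwedge_{x}\hom(\psi(x),\psi'(x))$. *)

Set Implicit Arguments.
Unset Strict Implicit.

Record quantale := Quantale {
  qcar :> Type;
  qle : qcar -> qcar -> Prop;
  qle_refl : forall x, qle x x;
  qle_trans : forall x y z, qle x y -> qle y z -> qle x z;
  qle_antisym : forall x y, qle x y -> qle y x -> x = y;
  qsup : (qcar -> Prop) -> qcar;
  qsup_ub : forall (S : qcar -> Prop) x, S x -> qle x (qsup S);
  qsup_least : forall (S : qcar -> Prop) y,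
      (forall x, S x -> qle x y) -> qle (qsup S) y;
  qtens : qcar -> qcar -> qcar;
  qk : qcar;
  qtens_assoc : forall x y z, qtens x (qtens y z) = qtens (qtens x y) z;
  qtens_comm : forall x y, qtens x y = qtens y x;
  qtens_k : forall x, qtens qk x = x;
  qtens_sup : forall x (S : qcar -> Prop),
      qtens x (qsup S) = qsup (fun v => exists s, S s /\ v = qtens x s)
}.

Arguments qle {q}.
Arguments qsup {q}.
Arguments qtens {q}.

Section Quantale.
Variable V : quantale.

Definition qinf (S : V -> Prop) : V :=
  qsup (fun w => forall s, S s -> qle w s).

(* hom(u,-), the right adjoint of u ⊗ - *)
Definition qhom (u v : V) : V := qsup (fun w => qle (qtens u w) v).

Definition way_below (u x : V) : Prop :=
  forall S : V -> Prop, qle x (qsup S) -> exists s, S s /\ qle u s.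

Definition is_Vcat (X : Type) (a : X -> X -> V) : Prop :=
  (forall x, qle (qk V) (a x x)) /\
  (forall x y z, qle (qtens (a x y) (a y z)) (a x z)).

Definition symmetric (X : Type) (a : X -> X -> V) : Prop :=
  forall x y, a x y = a y x.

Definition module_from_E (X : Type) (a : X -> X -> V) (phi : X -> V) : Prop :=
  forall x y, qle (qtens (phi x) (a x y)) (phi y).

Definition module_to_E (X : Type) (a : X -> X -> V) (psi : X -> V) : Prop :=
  forall x y, qle (qtens (a x y) (psi y)) (psi x).

Definition mod_adj (X : Type) (a : X -> X -> V) (phi psi : X -> V) : Prop :=
  qle (qk V) (qsup (fun v => exists x, v = qtens (phi x) (psi x))) /\
  (forall x y, qle (qtens (psi x) (phi y)) (a x y)).

Definition vclosure (Y : Type) (b : Y -> Y -> V) (M : Y -> Prop) : Y -> Prop :=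
  fun y => qle (qk V) (qsup (fun v => exists z, M z /\ v = qtens (b y z) (b z y))).

Definition right_adjoint_module (X : Type) (a : X -> X -> V) (psi : X -> V) : Prop :=
  module_to_E a psi /\
  exists phi, module_from_E a phi /\ mod_adj a phi psi.

Definition cauchy_completion (X : Type) (a : X -> X -> V) : Type :=
  { psi : X -> V | right_adjoint_module a psi }.

Definition cauchy_hom (X : Type) (a : X -> X -> V)
  (p q : cauchy_completion a) : V :=
  qinf (fun v => exists x, v = qhom (proj1_sig p x) (proj1_sig q x)).

End Quantale.

(* Since k is the top element, [u <= x ⊗ y] implies [u <= x] and [u <= y], and
   since [u_n << k], every hypothesis [k <= ⋁_i x_i ⊗ y_i] (adjunction, closure)
   yields for each n a single index i with [u_n <= x_i] and [u_n <= y_i].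
   Composing along these witnesses proves the desired inequality [v <= c] up to
   a factor [u_n ⊗ ... ⊗ u_n], and such factors can be dropped: the squares of
   an increasing sequence with supremum k again have supremum k, so
   [u_n ⊗ u_n ⊗ v <= c] for all n already gives [v <= c]. *)
From Stdlib Require Import Lia.
Set Implicit Arguments.
Unset Strict Implicit.

Section QuantaleFacts.
Variable V : quantale.

Lemma qtens_monor (z x y : V) : qle x y -> qle (qtens z x) (qtens z y).
Proof.
  intro Hxy.
  assert (Ey : y = qsup (fun v => v = x \/ v = y)).
  { apply qle_antisym.
    - apply qsup_ub; auto.
    - apply qsup_least. intros w [-> | ->]; auto using qle_refl. }
  rewrite Ey, qtens_sup. apply qsup_ub. exists x; auto.
Qed.

Lemma qtens_mono (x x' y y' : V) :
  qle x x' -> qle y y' -> qle (qtens x y) (qtens x' y').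
Proof.
  intros Hx Hy. apply qle_trans with (qtens x y').
  - now apply qtens_monor.
  - rewrite (qtens_comm x), (qtens_comm x'). now apply qtens_monor.
Qed.

Lemma qtens_kr (x : V) : qtens x (qk V) = x.
Proof. now rewrite qtens_comm, qtens_k. Qed.

Lemma qsup_mono (S T : V -> Prop) :
  (forall v, S v -> T v) -> qle (qsup S) (qsup T).
Proof. intro HST. apply qsup_least. auto using qsup_ub. Qed.

Lemma qinf_lb (S : V -> Prop) (s : V) : S s -> qle (qinf S) s.
Proof. intro Hs. apply qsup_least. auto. Qed.

Lemma qle_qinf (S : V -> Prop) (w : V) :
  (forall s, S s -> qle w s) -> qle w (qinf S).
Proof. intro Hw. now apply qsup_ub. Qed.

Lemma qle_qhom (x y w : V) : qle (qtens x w) y -> qle w (qhom x y).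
Proof. intro Hw. now apply qsup_ub. Qed.

Lemma qtens_qhom_le (x y : V) : qle (qtens x (qhom x y)) y.
Proof.
  unfold qhom. rewrite qtens_sup. apply qsup_least.
  now intros w [s [Hs ->]].
Qed.

Lemma qle_of_tens_cover (S : V -> Prop) (v c : V) :
  qle (qk V) (qsup S) -> (forall s, S s -> qle (qtens s v) c) -> qle v c.
Proof.
  intros HS Hc. apply qle_trans with (qtens v (qsup S)).
  - rewrite <- (qtens_kr v) at 1. now apply qtens_monor.
  - rewrite qtens_sup. apply qsup_least. intros w [s [Hs ->]].
    rewrite qtens_comm. auto.
Qed.

Hypothesis k_top : forall v : V, qle v (qk V).

Lemma qtens_le_r (x y : V) : qle (qtens x y) y.
Proof.
  rewrite <- (qtens_k y) at 2. apply qtens_mono; auto using qle_refl.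
Qed.

Lemma qle_tens_split (w x y : V) : qle w (qtens x y) -> qle w x /\ qle w y.
Proof.
  intro Hw. split; eapply qle_trans; eauto.
  - rewrite qtens_comm. apply qtens_le_r.
  - apply qtens_le_r.
Qed.

End QuantaleFacts.

Section Approximation.
Variables (V : quantale) (u : nat -> V).
Hypothesis u_cover : qle (qk V) (qsup (fun v => exists n, v = u n)).
Hypothesis u_mono : forall n, qle (u n) (u (S n)).

Lemma u_le (n m : nat) : n <= m -> qle (u n) (u m).
Proof.
  induction 1; [apply qle_refl | eapply qle_trans; eauto].
Qed.

Lemma squares_cover :
  qle (qk V) (qsup (fun v => exists n, v = qtens (u n) (u n))).
Proof.
  apply (qle_of_tens_cover u_cover). intros s [m ->].
  apply (qle_of_tens_cover u_cover). intros s [n ->].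
  rewrite qtens_kr. apply qle_trans with (qtens (u (n + m)) (u (n + m))).
  - apply qtens_mono; apply u_le; lia.
  - apply qsup_ub. eauto.
Qed.

Lemma qle_of_approx2 (v c : V) :
  (forall n, qle (qtens (u n) (qtens (u n) v)) c) -> qle v c.
Proof.
  intro Hc. apply (qle_of_tens_cover squares_cover). intros s [n ->].
  rewrite <- qtens_assoc. apply Hc.
Qed.

End Approximation.

Lemma qle_of_approx4 (V : quantale) (u : nat -> V)
  (u_cover : qle (qk V) (qsup (fun v => exists n, v = u n)))
  (u_mono : forall n, qle (u n) (u (S n))) (v c : V) :
  (forall n, qle (qtens (u n) (qtens (u n) (qtens (u n) (qtens (u n) v)))) c) ->
  qle v c.
Proof.
  intro Hc. apply (qle_of_approx2 (u := fun n => qtens (u n) (u n))).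
  - now apply squares_cover.
  - intro n. now apply qtens_mono.
  - intro n. rewrite <- !qtens_assoc. apply Hc.
Qed.

Section VCategories.
Variables (V : quantale) (X : Type) (a : X -> X -> V).

Lemma module_to_E_of_from (phi : X -> V) :
  symmetric a -> module_from_E a phi -> module_to_E a phi.
Proof.
  intros Hs Hphi x y. rewrite qtens_comm, Hs. apply Hphi.
Qed.

Lemma mod_adj_sym (phi psi : X -> V) :
  symmetric a -> mod_adj a phi psi -> mod_adj a psi phi.
Proof.
  intros Hs [Hk Hadj]. split.
  - eapply qle_trans; [exact Hk|]. apply qsup_mono.
    intros v [x ->]. exists x. apply qtens_comm.
  - intros x y. rewrite qtens_comm, Hs. apply Hadj.
Qed.

Lemma qinf_hom_swap_le (psi psi' : X -> V) :
  module_to_E a psi -> mod_adj a psi psi ->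
  (forall x y, qle (qtens (psi' x) (psi' y)) (a x y)) ->
  qle (qinf (fun v => exists x, v = qhom (psi x) (psi' x)))
      (qinf (fun v => exists x, v = qhom (psi' x) (psi x))).
Proof.
  intros Hpsi [Hk _] Hadj'.
  set (h := qinf _).
  assert (Hh : forall y, qle (qtens (psi y) h) (psi' y)).
  { intro y. eapply qle_trans; [|apply qtens_qhom_le].
    apply qtens_monor, qinf_lb. eauto. }
  apply qle_qinf. intros s [x ->]. apply qle_qhom.
  apply (qle_of_tens_cover Hk). intros s [y ->].
  replace (qtens (qtens (psi y) (psi y)) (qtens (psi' x) h))
    with (qtens (qtens (psi' x) (qtens (psi y) h)) (psi y)).
  - eapply qle_trans; [|apply (Hpsi x y)].
    apply qtens_mono; [|apply qle_refl].
    eapply qle_trans; [|apply (Hadj' x y)].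
    apply qtens_monor, Hh.
  - rewrite (qtens_comm _ (psi y)), <- (qtens_assoc (psi y) (psi y)).
    f_equal. now rewrite !qtens_assoc, (qtens_comm (psi' x)).
Qed.

End VCategories.

Section Corollary.
Variable V : quantale.
Hypothesis k_top : forall v : V, qle v (qk V).
Variable u : nat -> V.
Hypothesis u_cover : qle (qk V) (qsup (fun v => exists n, v = u n)).
Hypothesis u_wb : forall n, way_below (u n) (qk V).
Hypothesis u_mono : forall n, qle (u n) (u (S n)).

Lemma mod_adj_le (X : Type) (a : X -> X -> V) (phi psi : X -> V) :
  symmetric a -> module_to_E a psi -> mod_adj a phi psi ->
  forall x, qle (phi x) (psi x).
Proof.
  intros Hs Hpsi [Hk Hadj] x.
  apply (qle_of_approx2 u_cover u_mono). intro n.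
  destruct (u_wb n Hk) as [s [[y ->] Hy]].
  apply qle_tens_split in Hy as [_ Hy]; [|exact k_top].
  apply qle_trans with (qtens (psi y) (a x y)).
  - apply qtens_mono; [exact Hy|].
    rewrite Hs. eapply qle_trans; [|apply Hadj].
    apply qtens_mono; [exact Hy | apply qle_refl].
  - rewrite qtens_comm. apply Hpsi.
Qed.

Lemma mod_adj_eq (X : Type) (a : X -> X -> V) (phi psi : X -> V) :
  symmetric a -> module_from_E a phi -> module_to_E a psi -> mod_adj a phi psi ->
  forall x, phi x = psi x.
Proof.
  intros Hs Hphi Hpsi Hadj x. apply qle_antisym.
  - exact (mod_adj_le Hs Hpsi Hadj x).
  - exact (mod_adj_le Hs (module_to_E_of_from Hs Hphi) (mod_adj_sym Hs Hadj) x).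
Qed.

Lemma vclosure_sym_le (Y : Type) (b : Y -> Y -> V) (M : Y -> Prop) :
  is_Vcat b -> (forall y z, M y -> M z -> b y z = b z y) ->
  forall y z, vclosure b M y -> vclosure b M z -> qle (b y z) (b z y).
Proof.
  intros [_ Ht] HM y z Hy Hz.
  apply (qle_of_approx4 u_cover u_mono). intro n.
  destruct (u_wb n Hy) as [s [[m [Mm ->]] Hm]].
  destruct (u_wb n Hz) as [s [[m' [Mm' ->]] Hm']].
  apply qle_tens_split in Hm as [_ Hmy]; [|exact k_top].
  apply qle_tens_split in Hm' as [Hzm' _]; [|exact k_top].
  assert (Hm'm : qle (qtens (u n) (qtens (u n) (b y z))) (b m' m)).
  { rewrite <- (HM m m' Mm Mm'), (qtens_comm (u n) (b y z)).
    eapply qle_trans; [|apply (Ht m y m')].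
    apply qtens_mono; [exact Hmy|].
    eapply qle_trans; [|apply Ht].
    apply qtens_mono; [apply qle_refl | exact Hzm']. }
  eapply qle_trans; [|apply (Ht z m' y)].
  apply qtens_mono; [exact Hzm'|].
  eapply qle_trans; [|apply (Ht m' m y)].
  rewrite qtens_comm. apply qtens_mono; [exact Hm'm | exact Hmy].
Qed.

Lemma right_adjoint_module_self_adj (X : Type) (a : X -> X -> V) (psi : X -> V) :
  symmetric a -> right_adjoint_module a psi -> mod_adj a psi psi.
Proof.
  intros Hs [Hpsi [phi [Hphi [Hk Hadj]]]].
  assert (E := mod_adj_eq Hs Hphi Hpsi (conj Hk Hadj)). split.
  - eapply qle_trans; [exact Hk|]. apply qsup_mono.
    intros v [x ->]. exists x. now rewrite E.
  - intros x y. rewrite <- (E y). apply Hadj.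
Qed.

Lemma cauchy_completion_symmetric (X : Type) (a : X -> X -> V) :
  symmetric a -> symmetric (cauchy_hom (a := a)).
Proof.
  intros Hs [psi Hpsi] [psi' Hpsi'].
  assert (Hadj := right_adjoint_module_self_adj Hs Hpsi).
  assert (Hadj' := right_adjoint_module_self_adj Hs Hpsi').
  unfold cauchy_hom; simpl. apply qle_antisym.
  - apply (qinf_hom_swap_le (a := a)); [apply Hpsi | exact Hadj | apply Hadj'].
  - apply (qinf_hom_swap_le (a := a)); [apply Hpsi' | exact Hadj' | apply Hadj].
Qed.

End Corollary.

Unset Implicit Arguments.

Theorem corollary3p20 (V : quantale)
  (k_top : forall v : V, qle v (qk V))
  (u : nat -> V)
  (u_sup : qsup (fun v => exists n, v = u n) = qk V)
  (u_wb : forall n, way_below (u n) (qk V))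
  (u_mono : forall n, qle (u n) (u (S n))) :
  (* (1) *)
  (forall (X : Type) (a : X -> X -> V), is_Vcat a -> symmetric a ->
     forall phi psi : X -> V,
       module_from_E a phi -> module_to_E a psi -> mod_adj a phi psi ->
       forall x, phi x = psi x) /\
  (* (2) *)
  (forall (Y : Type) (b : Y -> Y -> V), is_Vcat b ->
     forall M : Y -> Prop,
       (forall y z, M y -> M z -> b y z = b z y) ->
       forall y z, vclosure b M y -> vclosure b M z -> b y z = b z y) /\
  (* (3) *)
  (forall (X : Type) (a : X -> X -> V), is_Vcat a -> symmetric a ->
     symmetric (cauchy_hom (a := a))).
Proof.
  assert (u_cover : qle (qk V) (qsup (fun v => exists n, v = u n)))
    by (rewrite u_sup; apply qle_refl).
  split; [|split].
  - intros X a _ Hs phi psi. exact (mod_adj_eq k_top u_cover u_wb u_mono Hs).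
  - intros Y b Hb M HM y z Hy Hz. apply qle_antisym;
      eapply (vclosure_sym_le k_top u_cover u_wb u_mono Hb HM); eauto.
  - intros X a _. exact (cauchy_completion_symmetric k_top u_cover u_wb u_mono (a := a)).
Qed.
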